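(* Let $\varphi$ be a quantifier-free Presburger formula with exactly one free variable. Then $|\varphi|_{\mathsf{p}}\le 2^{|\varphi|}$.
   Context: Quantifier-free Presburger formulas are Boolean combinations of atoms $\sum a_ix_i\le b$ and $\sum a_ix_i\equiv b\pmod c$, integer constants written in binary; $|\varphi|$ is the number of symbols needed to write $\varphi$ (constants in binary). A set $S\subseteq\mathbb{Z}$ is ultimately periodic if there are $n_0,p\in\mathbb{N}$, $p\ge1$, such that for all $n\in\mathbb{Z}$ with $|n|\ge n_0$, $n+p\in S$ iff $n\in S$; such $p$ is a period of $S$. Every Presburger formula with one free variable defines an ultimately periodic set, and $|\varphi|_{\mathsf{p}}$ denotes the smallest period of the set defined by $\varphi$. *)

From mathcomp Require Import all_boot all_order all_algebra.
Set Implicit Arguments. Unset Strict Implicit. Unset Printing Implicit Defensive.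
Import Order.TTheory GRing.Theory Num.Theory.
Local Open Scope ring_scope.

(* Linear terms  sum_i a_i * x_{v_i}, as a list of (coefficient, variable index). *)
Definition term := seq (int * nat).

Inductive qf_formula : Type :=
| FLe   : term -> int -> qf_formula
| FCong : term -> int -> int -> qf_formula
| FNeg  : qf_formula -> qf_formula
| FAnd  : qf_formula -> qf_formula -> qf_formula
| FOr   : qf_formula -> qf_formula -> qf_formula.

Definition eval_term (env : nat -> int) (t : term) : int :=
  \sum_(av <- t) av.1 * env av.2.

Fixpoint holds (env : nat -> int) (f : qf_formula) : bool :=
  match f with
  | FLe t b => eval_term env t <= b
  | FCong t b c => (eval_term env t == b %[mod c])%Z
  | FNeg g => ~~ holds env g
  | FAnd g h => holds env g && holds env h
  | FOr g h => holds env g || holds env h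
  end.

Definition term_vars (t : term) : seq nat := map snd t.
Fixpoint fvars (f : qf_formula) : seq nat :=
  match f with
  | FLe t _ => term_vars t
  | FCong t _ _ => term_vars t
  | FNeg g => fvars g
  | FAnd g h | FOr g h => fvars g ++ fvars h
  end.

Definition one_free_var (f : qf_formula) (v : nat) : Prop :=
  fvars f != [::] /\ all (fun w => w == v) (fvars f).

(* Size, with integer constants written in binary. *)
Definition bitlen (n : nat) : nat := (trunc_log 2 n).+1.   (* binary digits of n; 0 -> 1 *)
Definition csize (k : int) : nat := (((k < 0)%R : nat) + bitlen (absz k))%N.
(* a_1 x_1 + ... + a_k x_k : each a_i (binary) and x_i, plus k-1 '+' symbols *)
Definition term_size (t : term) : nat :=
  (\sum_(av <- t) (csize av.1 + 1) + (size t).-1)%N.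
Fixpoint fsize (f : qf_formula) : nat :=
  (match f with
  | FLe t b => term_size t + 1 + csize b
  | FCong t b c => term_size t + 1 + csize b + 1 + csize c
  | FNeg g => (fsize g).+1
  | FAnd g h | FOr g h => (fsize g + fsize h).+1
  end)%N.

Definition defined_set (f : qf_formula) (v : nat) : int -> bool :=
  fun n => holds (fun _ => n) f.

Definition is_period (S : int -> bool) (p : nat) : Prop :=
  (1 <= p)%N /\ exists n0 : nat, forall n : int,
    (n0 <= absz n)%N -> S (n + p%:Z) = S n.

Definition is_smallest_period (S : int -> bool) (p : nat) : Prop :=
  is_period S p /\ forall q, is_period S q -> (p <= q)%N.

From mathcomp Require Import all_boot all_order all_algebra.
From mathcomp Require Import zify ring.
From Stdlib Require Import Classical.
Import Order.TTheory GRing.Theory Num.Theory.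

Set Implicit Arguments.
Unset Strict Implicit.
Unset Printing Implicit Defensive.

(* With a single variable x every term collapses to A x, so an atom defines
   either {x | A x <= b}, which is constant on each side beyond |b| (period 1),
   or {x | A x = b mod c}, which has period |c| (for c = 0 it is an equation,
   again constant far out).  Boolean combinations are eventually periodic with
   the product of the periods of their atoms, and |c| < 2^(csize c) bounds
   this product by 2^|f|. *)

Local Open Scope ring_scope.

Definition same_tail (N : nat) (n m : int) : bool :=
  ((N%:Z <= n) && (N%:Z <= m)) || ((n <= - N%:Z) && (m <= - N%:Z)).

Lemma same_tail_le (N N' : nat) (n m : int) :
  (N <= N')%N -> same_tail N' n m -> same_tail N n m.
Proof. by move=> le; rewrite /same_tail; lia. Qed.

(* Unlike is_period, any two points of one tail congruent mod p must agree;
   this makes the notion stable under passing to multiples of p. *)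
Definition tail_periodic (S : int -> bool) (p : nat) : Prop :=
  exists N : nat, forall n m : int,
    (p %| absz (n - m))%N -> same_tail N n m -> S n = S m.

Lemma tail_periodic_dvd (S : int -> bool) (p q : nat) :
  (p %| q)%N -> tail_periodic S p -> tail_periodic S q.
Proof.
by move=> pq [N HN]; exists N => n m qd; apply: HN; apply: dvdn_trans qd.
Qed.

Lemma eq_tail_periodic (S T : int -> bool) (p : nat) :
  S =1 T -> tail_periodic S p -> tail_periodic T p.
Proof. by move=> eqST [N HN]; exists N => n m; rewrite -!eqST; apply: HN. Qed.

Lemma tail_periodic_comp (g : bool -> bool) (S : int -> bool) (p : nat) :
  tail_periodic S p -> tail_periodic (fun n => g (S n)) p.
Proof. by move=> [N HN]; exists N => n m pd tl /=; rewrite (HN n m). Qed.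

Lemma tail_periodic_op (op : bool -> bool -> bool) (S T : int -> bool)
    (p q : nat) :
  tail_periodic S p -> tail_periodic T q ->
  tail_periodic (fun n => op (S n) (T n)) (p * q)%N.
Proof.
move=> /(tail_periodic_dvd (dvdn_mulr q (dvdnn p))) [N1 HS].
move=> /(tail_periodic_dvd (dvdn_mull p (dvdnn q))) [N2 HT].
exists (maxn N1 N2) => n m pqd tl.
rewrite (HS n m pqd) ?(HT n m pqd) //; apply: same_tail_le tl; lia.
Qed.

Lemma tail_periodic_period (S : int -> bool) (p : nat) :
  (0 < p)%N -> tail_periodic S p -> is_period S p.
Proof.
move=> p_gt0 [N HN]; split => //; exists (N + p)%N => n n_far.
apply: HN; last by rewrite /same_tail; lia.
by rewrite addrAC subrr add0r.
Qed.

Lemma eval_term_const (t : term) (n : int) :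
  eval_term (fun _ => n) t = (\sum_(av <- t) av.1) * n.
Proof. by rewrite /eval_term big_distrl. Qed.

Lemma mul_le_right_tail (A b n : int) (N : nat) :
  A != 0 -> `|b| < N%:Z -> N%:Z <= n -> (A * n <= b) = (A < 0).
Proof. nia. Qed.

Lemma mul_le_left_tail (A b n : int) (N : nat) :
  A != 0 -> `|b| < N%:Z -> n <= - N%:Z -> (A * n <= b) = (0 < A).
Proof.
move=> A0 bN nN; rewrite -mulrNN (@mul_le_right_tail _ _ _ N) ?oppr_eq0 //.
  by rewrite oppr_lt0.
by rewrite lerNr.
Qed.

Lemma tail_periodic_le (A b : int) : tail_periodic (fun n => A * n <= b) 1%N.
Proof.
have [-> | A0] := eqVneq A 0.
  by exists 0%N => n m _ _; rewrite !mul0r.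
exists (absz b).+1 => n m _ /orP[] /andP[nN mN].
  by rewrite !(@mul_le_right_tail _ _ _ (absz b).+1) //; lia.
by rewrite !(@mul_le_left_tail _ _ _ (absz b).+1) //; lia.
Qed.

Definition cong_period (c : int) : nat := if c == 0 then 1%N else absz c.

Lemma tail_periodic_cong (A b c : int) :
  tail_periodic (fun n => (A * n == b %[mod c])%Z) (cong_period c).
Proof.
rewrite /cong_period; have [-> | c0] := eqVneq c 0.
  have eq_le2 n : (A * n == b %[mod 0])%Z = (A * n <= b) && (- A * n <= - b).
    by rewrite modz0; lia.
  apply: eq_tail_periodic (fun n => esym (eq_le2 n)) _.
  by apply: (@tail_periodic_op andb _ _ 1 1); apply: tail_periodic_le.
exists 0%N => n m cd _; rewrite !eqz_mod_dvd.
have -> : A * n - b = (A * m - b) + A * (n - m) by ring.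
by rewrite rpredDr // dvdz_mull.
Qed.

Fixpoint fperiod (f : qf_formula) : nat :=
  (match f with
  | FLe _ _ => 1
  | FCong _ _ c => cong_period c
  | FNeg g => fperiod g
  | FAnd g h | FOr g h => fperiod g * fperiod h
  end)%N.

Lemma fperiod_gt0 (f : qf_formula) : (0 < fperiod f)%N.
Proof.
elim: f => //= [t b c | g Hg h Hh | g Hg h Hh]; rewrite ?muln_gt0 ?Hg ?Hh //.
by rewrite /cong_period; case: eqP => // /eqP; rewrite absz_gt0.
Qed.

Lemma tail_periodic_fperiod (f : qf_formula) :
  tail_periodic (fun n => holds (fun _ => n) f) (fperiod f).
Proof.
elim: f => [t b | t b c | g IH | g IHg h IHh | g IHg h IHh] /=.
- apply: eq_tail_periodic (tail_periodic_le _ b) => n.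
  by rewrite eval_term_const.
- apply: eq_tail_periodic (tail_periodic_cong _ b c) => n.
  by rewrite eval_term_const.
- exact: (tail_periodic_comp negb IH).
- exact: (tail_periodic_op andb IHg IHh).
- exact: (tail_periodic_op orb IHg IHh).
Qed.

Lemma absz_lt_exp_csize (k : int) : (absz k < 2 ^ csize k)%N.
Proof.
apply: leq_trans (trunc_log_ltn _ (isT : (1 < 2)%N)) _.
by rewrite leq_exp2l // /csize /bitlen leq_addl.
Qed.

Lemma fperiod_le_exp_fsize (f : qf_formula) : (fperiod f <= 2 ^ fsize f)%N.
Proof.
elim: f => [t b | t b c | g IH | g IHg h IHh | g IHg h IHh] /=.
- by rewrite expn_gt0.
- rewrite /cong_period; case: eqP => _; first by rewrite expn_gt0.
  apply: leq_trans (ltnW (absz_lt_exp_csize c)) _; rewrite leq_exp2l //; lia.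
- by apply: leq_trans IH _; rewrite leq_exp2l.
- by apply: leq_trans (leq_mul IHg IHh) _; rewrite -expnD leq_exp2l.
- by apply: leq_trans (leq_mul IHg IHh) _; rewrite -expnD leq_exp2l.
Qed.

Lemma ex_least_le (P : nat -> Prop) (k : nat) :
  P k -> exists p, [/\ P p, forall q, P q -> (p <= q)%N & (p <= k)%N].
Proof.
elim/ltn_ind: k => k IH Pk.
have [[q [lt_qk Pq]] | no_smaller] := classic (exists q, (q < k)%N /\ P q).
  have [p [Pp p_least le_pq]] := IH q lt_qk Pq.
  by exists p; split=> //; apply: leq_trans le_pq (ltnW lt_qk).
exists k; split=> // q Pq; rewrite leqNgt; apply/negP => lt_qk.
by apply: no_smaller; exists q.
Qed.

Theorem lemma6p1 (f : qf_formula) (v : nat) :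
  one_free_var f v ->
  exists p : nat, is_smallest_period (defined_set f v) p /\ (p <= 2 ^ fsize f)%N.
Proof.
(* defined_set substitutes n for every variable. *)
move=> _.
have f_period : is_period (defined_set f v) (fperiod f).
  exact: tail_periodic_period (fperiod_gt0 f) (tail_periodic_fperiod f).
have [p [p_period p_least le_p]] := ex_least_le f_period.
exists p; split; first by split.
exact: leq_trans le_p (fperiod_le_exp_fsize f).
Qed.
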